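(* Let $G$ be a network such that either $J^G_1\equiv0$ or $J^G_0\equiv0$. Then the underlying simple graph of $G$ is a tree.
   Context: A network is a finite connected loopless multigraph, possibly with multiple edges. Let $G$ have $m$ edges and $n$ vertices, and put $d=m-n+1$. Let $R_G(q)$ be the probability that deleting each edge independently with probability $q$ leaves a connected spanning subgraph. Put $H_G(q)=(1-q)^{1-n}R_G(q)$ (a polynomial) and $J_G(u)=(u-1)^dH_G\big(\frac{-1-u}{1-u}\big)$. Write $J_G(u)=J^G_0(u^2)+uJ^G_1(u^2)$ with $J^G_0,J^G_1\in\mathbb{R}[x]$. The underlying simple graph of $G$ has the same vertices and one edge for each pair of adjacent vertices. *)

From HB Require Import structures.
From mathcomp Require Import all_boot all_order all_algebra.
From mathcomp Require Import reals.
Set Implicit Arguments. Unset Strict Implicit. Unset Printing Implicit Defensive.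
Import Order.TTheory GRing.Theory Num.Theory.
Local Open Scope ring_scope.

(* A network with n vertices ('I_n) and m edges ('I_m); edge i joins the
   endpoints (e i).1 and (e i).2 (parallel edges allowed). *)
Section Network.
Variables (n m : nat) (e : 'I_m -> 'I_n * 'I_n).

Definition sub_adj (S : {set 'I_m}) : rel 'I_n :=
  fun x y => [exists i in S, (e i == (x, y)) || (e i == (y, x))].

Definition sub_connected (S : {set 'I_m}) : bool :=
  [forall x, [forall y, connect (sub_adj S) x y]].

Definition is_network : Prop :=
  (0 < n)%N /\ (forall i, (e i).1 != (e i).2) /\ sub_connected setT.

(* all-terminal reliability polynomial R_G(q): each edge is deleted
   independently with probability q, kept with probability 1 - q *)
Definition reliability (R : realType) : {poly R} :=
  \sum_(S : {set 'I_m} | sub_connected S)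
     (1 - 'X) ^+ #|S| * 'X ^+ (m - #|S|).

(* H_G(q) = (1-q)^(1-n) R_G(q), as a polynomial *)
Definition Hpoly (R : realType) : {poly R} :=
  reliability R %/ (1 - 'X) ^+ (n - 1).

Definition cyclo : nat := (m + 1 - n)%N.

Definition Jfun (R : realType) (u : R) : R :=
  (u - 1) ^+ cyclo * (Hpoly R).[(-1 - u) / (1 - u)].

Definition simple_adj : rel 'I_n :=
  fun x y => (x != y) && [exists i, (e i == (x, y)) || (e i == (y, x))].

End Network.

Definition is_tree (k : nat) (adj : rel 'I_k) : Prop :=
  (forall x y, connect adj x y) /\
  (forall c : seq 'I_k, uniq c -> (2 < size c)%N -> ~~ cycle adj c).

From HB Require Import structures.
From mathcomp Require Import all_boot all_order all_algebra.
From mathcomp Require Import reals.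
From mathcomp Require Import zify ring.
Import Order.TTheory GRing.Theory Num.Theory.
Set Implicit Arguments. Unset Strict Implicit. Unset Printing Implicit Defensive.

(* Substituting q = (-1-u)/(1-u) turns J_G into the polynomial
     J(u) = \sum_S (-2)^(|S|-n+1) (u+1)^(m-|S|),
   S ranging over the connected spanning edge sets.  Its coefficient of u^d is
   the number t of spanning trees and that of u^(d-1) is d t - 2 c, where c
   counts the connected spanning edge sets with n edges.  If J_0 or J_1
   vanishes, J has only odd or only even powers, so one of these coefficients
   is 0; as t > 0 this forces d t = 2 c.  On the other hand (U, h) |-> (U \ h, h),
   for h a removable edge of such an n-edge set U, shows that d t is at least
   the total number of removable edges.  Each U has at least two of them (the
   edges of its cycle), and if the simple graph has a cycle, adding to a
   spanning tree an edge parallel to no tree edge yields a U with at least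
   three.  Hence d t > 2 c. *)

Lemma card_dep_pairs (I J : finType) (A : {set I}) (Q : I -> {set J}) :
  #|[set p : I * J | (p.1 \in A) && (p.2 \in Q p.1)]| = (\sum_(i in A) #|Q i|)%N.
Proof.
rewrite -sum1_card.
rewrite (eq_bigl (fun p => (p.1 \in A) && (p.2 \in Q p.1))) => [|p]; last by rewrite inE.
rewrite -(pair_big_dep (mem A) (fun i => mem (Q i)) (fun _ _ => 1%N)).
by apply: eq_bigr => i _; rewrite sum1_card.
Qed.

Section Network.
Variables (n m : nat) (e : 'I_m -> 'I_n * 'I_n).
Hypothesis loopless : forall i, (e i).1 != (e i).2.
Hypothesis npos : (0 < n)%N.

Local Notation adj := (sub_adj e).
Local Notation conn := (sub_connected e).

Definition joins (h : 'I_m) (x y : 'I_n) : bool := (e h == (x, y)) || (e h == (y, x)).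
Definition incident (h : 'I_m) (v : 'I_n) : bool := ((e h).1 == v) || ((e h).2 == v).

Lemma joins_sym h x y : joins h x y = joins h y x.
Proof. by rewrite /joins orbC. Qed.

Lemma joins_edge h : joins h (e h).1 (e h).2.
Proof. by rewrite /joins -surjective_pairing eqxx. Qed.

Lemma joins_neq h x y : joins h x y -> x != y.
Proof. by move=> jh; have := loopless h; case/orP: jh => /eqP -> //=; rewrite eq_sym. Qed.

Lemma joins_endpoints h x y a b : joins h x y -> joins h a b ->
  (a, b) = (x, y) \/ (a, b) = (y, x).
Proof. by rewrite /joins => /orP[] /eqP -> /orP[] /eqP [-> ->]; auto. Qed.

Lemma joins_incident h x y : joins h x y -> incident h x && incident h y.
Proof. by rewrite /incident /joins => /orP[] /eqP -> /=; rewrite !eqxx ?orbT. Qed.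

Lemma incident_joins h x y z : joins h x y -> incident h z -> z = x \/ z = y.
Proof. by rewrite /incident /joins => /orP[] /eqP -> /= /orP[] /eqP ->; auto. Qed.

Lemma incident2_joins h x y : incident h x -> incident h y -> x != y -> joins h x y.
Proof.
rewrite /incident /joins; case: (e h) => a b /=.
by case/orP=> /eqP <-; case/orP=> /eqP <-; rewrite ?eqxx ?orbT.
Qed.

Lemma sub_adjP (S : {set 'I_m}) x y :
  reflect (exists2 h, h \in S & joins h x y) (adj S x y).
Proof. exact: exists_inP. Qed.

Lemma sub_adj_sym (S : {set 'I_m}) : symmetric (adj S).
Proof.
by move=> x y; apply/sub_adjP/sub_adjP=> -[h hS]; exists h; rewrite // joins_sym.
Qed.

Lemma connect_sub_adj_sym (S : {set 'I_m}) x y :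
  connect (adj S) x y = connect (adj S) y x.
Proof. exact/sym_connect_sym/sub_adj_sym. Qed.

Lemma sub_adj_neq (S : {set 'I_m}) x y : adj S x y -> x != y.
Proof. by case/sub_adjP=> h _ /joins_neq. Qed.

Lemma sub_adj_subset (S S' : {set 'I_m}) x y :
  S \subset S' -> adj S x y -> adj S' x y.
Proof.
by move=> sSS' /sub_adjP[h hS jh]; apply/sub_adjP; exists h; first exact: (subsetP sSS').
Qed.

Lemma connect_sub_adj_subset (S S' : {set 'I_m}) x y :
  S \subset S' -> connect (adj S) x y -> connect (adj S') x y.
Proof. by move=> sSS'; apply: connect_sub => u v /(sub_adj_subset sSS') /connect1. Qed.

Lemma sub_connectedP (S : {set 'I_m}) :
  reflect (forall x y, connect (adj S) x y) (conn S).
Proof.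
apply: (iffP forallP) => [cS x y|cS x]; last exact/forallP.
exact: (forallP (cS x)).
Qed.

Lemma sub_connected_subset (S S' : {set 'I_m}) : S \subset S' -> conn S -> conn S'.
Proof.
move=> sSS' /sub_connectedP cS; apply/sub_connectedP => x y.
exact: connect_sub_adj_subset (cS x y).
Qed.

Lemma sub_adj_setD1 (S : {set 'I_m}) h x y :
  ~~ incident h x || ~~ incident h y -> adj S x y -> adj (S :\ h) x y.
Proof.
move=> off /sub_adjP[i iS ji]; apply/sub_adjP; exists i => //.
rewrite !inE iS andbT; apply: contraTneq off => <-.
by rewrite negb_or !negbK; exact: joins_incident.
Qed.

Lemma path_setD1 (S : {set 'I_m}) h x p :
  all (fun v => ~~ incident h v) (x :: p) -> path (adj S) x p -> path (adj (S :\ h)) x p.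
Proof.
elim: p x => [//|y p IHp] x /= /andP[hx hp] /andP[a pa].
by rewrite sub_adj_setD1 ?hx ?IHp.
Qed.

Lemma sub_connected_setD1 (S : {set 'I_m}) h x y :
  conn S -> joins h x y -> connect (adj (S :\ h)) x y -> conn (S :\ h).
Proof.
move=> /sub_connectedP cS jh cxy; apply/sub_connectedP => u v.
apply: connect_sub (cS u v) => a b /sub_adjP[i iS ji].
have [eih|ih] := eqVneq i h.
  by subst i; case: (joins_endpoints jh ji) => -[-> ->]; rewrite // connect_sub_adj_sym.
by apply/connect1/sub_adjP; exists i; rewrite // !inE ih.
Qed.

Section Distance.
Variables (S : {set 'I_m}) (r : 'I_n).
Hypothesis cS : conn S.

Fixpoint reachable_in (k : nat) (v : 'I_n) : bool :=
  if k is k'.+1 then (v == r) || [exists w, adj S v w && reachable_in k' w]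
  else v == r.

Lemma reachable_in_path v p :
  path (adj S) v p -> last v p = r -> reachable_in (size p) v.
Proof.
elim: p v => [|w p IHp] v /=; first by move=> _ ->.
by case/andP=> a pa l; apply/orP; right; apply/existsP; exists w; rewrite a IHp.
Qed.

Lemma reachable_in_exists v : exists k, reachable_in k v.
Proof.
have /connectP[p pa l] := (sub_connectedP S cS) v r.
by exists (size p); apply: reachable_in_path pa (esym l).
Qed.

Definition dist (v : 'I_n) : nat := ex_minn (reachable_in_exists v).

Lemma dist_reachable v : reachable_in (dist v) v.
Proof. by rewrite /dist; case: ex_minnP. Qed.

Lemma dist_min v k : reachable_in k v -> (dist v <= k)%N.
Proof. by rewrite /dist; case: ex_minnP => k0 _; apply. Qed.

Lemma dist_root : dist r = 0%N.
Proof. by apply/eqP; rewrite -leqn0; apply: dist_min; rewrite /= eqxx. Qed.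

Lemma dist_eq0 v : dist v = 0%N -> v = r.
Proof. by move=> d0; have := dist_reachable v; rewrite d0 => /eqP. Qed.

Lemma parent_edge v : v != r ->
  exists2 f, f \in S & exists2 w, joins f v w & (dist w < dist v)%N.
Proof.
move=> vr; have := dist_reachable v; case Ev: (dist v) => [|k] /=.
  by rewrite (negbTE vr).
rewrite (negbTE vr) /= => /existsP[w /andP[/sub_adjP[f fS jf] rw]].
by exists f => //; exists w; rewrite // ltnS dist_min.
Qed.

(* Parent edges strictly decrease the distance to r, so descending from a
   never uses h, whose endpoints are no closer to r than a. *)
Lemma connect_setD1_root h a :
  (forall z, incident h z -> dist a <= dist z)%N -> connect (adj (S :\ h)) a r.
Proof.
elim: {a}(dist a) {-2}a (leqnn (dist a)) => [|k IHk] a.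
  by rewrite leqn0 => /eqP /dist_eq0 -> _.
move=> le near; have [->|ar] := eqVneq a r; first exact: connect0.
have [f fS [w jf lt]] := parent_edge ar.
have fh : f != h.
  apply: contraTneq lt => fh; rewrite -leqNgt near //.
  by rewrite -fh; case/andP: (joins_incident jf).
apply: connect_trans (connect1 _) (IHk w _ _).
- by apply/sub_adjP; exists f; rewrite // !inE fh.
- by rewrite -ltnS (leq_trans lt le).
- by move=> z /near; apply/leq_trans/ltnW.
Qed.

Lemma connect_setD1_levels h x y :
  (forall z, incident h z -> dist x <= dist z)%N ->
  (forall z, incident h z -> dist y <= dist z)%N ->
  connect (adj (S :\ h)) x y.
Proof.
move=> nx ny; apply: connect_trans (connect_setD1_root nx) _.
by rewrite connect_sub_adj_sym connect_setD1_root.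
Qed.

Lemma connect_setD1_parent h h' v a a' :
  h \in S -> h != h' -> joins h v a -> joins h' v a' ->
  (dist a <= dist a')%N -> (dist a' < dist v)%N -> connect (adj (S :\ h')) v a'.
Proof.
move=> hS hh' jh jh' le lt.
apply: (@connect_trans _ _ a) (connect1 _) (connect_setD1_levels _ _).
- by apply/sub_adjP; exists h; rewrite // !inE hh'.
- by move=> z /(incident_joins jh') [->|->] //; rewrite ltnW // (leq_ltn_trans le).
- by move=> z /(incident_joins jh') [->|->] //; rewrite ltnW.
Qed.

Definition far (h : 'I_m) : 'I_n :=
  if (dist (e h).1 < dist (e h).2)%N then (e h).2 else (e h).1.

Lemma far_parent f v w : joins f v w -> (dist w < dist v)%N -> far f = v.
Proof.
by rewrite /far => /orP[] /eqP -> lt /=; rewrite ?lt // ltnNge ltnW.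
Qed.

Lemma far_joins h : dist (e h).1 != dist (e h).2 ->
  exists2 a, joins h (far h) a & (dist a < dist (far h))%N.
Proof.
rewrite /far; case: ltnP => [lt _|le ne].
  by exists (e h).1; rewrite // joins_sym joins_edge.
by exists (e h).2; rewrite ?joins_edge // ltn_neqAle le eq_sym ne.
Qed.

End Distance.

Lemma card_sub_connected S : conn S -> (n.-1 <= #|S|)%N.
Proof.
move=> cS; pose r := Ordinal npos.
have sub : [set~ r] \subset far r cS @: S.
  apply/subsetP => v; rewrite !inE => vr.
  have [f fS [w jf lt]] := parent_edge cS vr.
  by apply/imsetP; exists f; rewrite // (far_parent jf lt).
by have := leq_trans (subset_leq_card sub) (leq_imset_card _ _); rewrite cardsC1 card_ord.
Qed.

(* Without removable edges, the far endpoint of an edge determines the edge. *)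
Lemma card_minimal_connected S :
  conn S -> (forall h, h \in S -> ~~ conn (S :\ h)) -> (#|S| <= n.-1)%N.
Proof.
move=> cS minS; pose r := Ordinal npos.
have uneven h : h \in S -> dist r cS (e h).1 != dist r cS (e h).2.
  move=> hS; apply: contra (minS h hS) => /eqP lvl.
  apply: (sub_connected_setD1 cS (joins_edge h)).
  apply: (connect_setD1_levels (r := r) (cS := cS)) => z.
    by case/(incident_joins (joins_edge h)) => ->; rewrite ?lvl.
  by case/(incident_joins (joins_edge h)) => ->; rewrite ?lvl.
have far_inj : {in S &, injective (far r cS)}.
  move=> h h' hS h'S E; apply/eqP; apply: contraT => hh'.
  have [a ja la] := far_joins (uneven h hS); have [a' ja' la'] := far_joins (uneven h' h'S).
  rewrite -E in ja' la'.
  case: (leqP (dist r cS a) (dist r cS a')) => le.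
    case/negP: (minS h' h'S); apply: (sub_connected_setD1 cS ja').
    exact: connect_setD1_parent hS hh' ja ja' le la'.
  case/negP: (minS h hS); apply: (sub_connected_setD1 cS ja).
  by apply: connect_setD1_parent h'S _ ja' ja (ltnW le) la; rewrite eq_sym.
have sub : far r cS @: S \subset [set~ r].
  apply/subsetP => _ /imsetP[h hS ->]; rewrite !inE; apply/eqP => E.
  by have [a _] := far_joins (uneven h hS); rewrite E dist_root.
by rewrite -(card_in_imset far_inj); have := subset_leq_card sub; rewrite cardsC1 card_ord.
Qed.

Definition removable_edges (S : {set 'I_m}) : {set 'I_m} :=
  [set h in S | conn (S :\ h)].

Definition spanning_trees : {set {set 'I_m}} :=
  [set S : {set 'I_m} | conn S && (#|S| == n.-1)].

Definition unicyclic : {set {set 'I_m}} :=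
  [set S : {set 'I_m} | conn S && (#|S| == n)].

Lemma mem_removable_setU1 T g : conn T -> g \notin T -> g \in removable_edges (g |: T).
Proof. by move=> cT gT; rewrite inE setU11 setU1K. Qed.

Lemma removable_edge_at T g x y : conn T -> g \notin T -> joins g x y ->
  exists2 f, f \in T & incident f x && (f \in removable_edges (g |: T)).
Proof.
move=> cT gT jg; have [f fT [w jf lt]] := parent_edge cT (joins_neq jg).
have fg : f != g by apply: contraNneq gT => <-.
have cU : conn (g |: T) := sub_connected_subset (subsetUr _ _) cT.
exists f; rewrite // (andP (joins_incident jf)).1 !inE fT orbT /=.
apply: (sub_connected_setD1 cU jf); apply: (@connect_trans _ _ y) (connect1 _) _.
  by apply/sub_adjP; exists g; rewrite // !inE eq_sym fg eqxx.
rewrite connect_sub_adj_sym; apply: connect_sub_adj_subset (setSD _ (subsetUr _ _)) _.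
by apply: (connect_setD1_root (cS := cT)) => z /(incident_joins jf) [->|->] //; rewrite ltnW.
Qed.

Lemma two_le_card_removable T g :
  conn T -> g \notin T -> (2 <= #|removable_edges (g |: T)|)%N.
Proof.
move=> cT gT; have [h hT /andP[_ hR]] := removable_edge_at cT gT (joins_edge g).
have gh : g != h by apply: contraNneq gT => ->.
apply: leq_trans (subset_leq_card (_ : [set g; h] \subset _)); first by rewrite cards2 gh.
by apply/subsetP => z /set2P[] ->; [exact: mem_removable_setU1 | exact: hR].
Qed.

(* h1 and h2 start shortest paths in T from each endpoint of g to the other;
   they can only coincide with an edge joining the endpoints of g. *)
Lemma three_le_card_removable T g : conn T -> g \notin T ->
  (forall h, h \in T -> ~~ joins h (e g).1 (e g).2) ->
  (3 <= #|removable_edges (g |: T)|)%N.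
Proof.
move=> cT gT nonpar.
have [h1 h1T /andP[h1x h1R]] := removable_edge_at cT gT (joins_edge g).
have jg : joins g (e g).2 (e g).1 by rewrite joins_sym joins_edge.
have [h2 h2T /andP[h2y h2R]] := removable_edge_at cT gT jg.
have h12 : h1 != h2.
  apply: contraNneq (nonpar h1 h1T) => E.
  by apply: incident2_joins h1x _ (loopless g); rewrite E.
have gh h : h \in T -> g != h by move=> hT; apply: contraNneq gT => ->.
apply: leq_trans (subset_leq_card (_ : g |: [set h1; h2] \subset _)).
  by rewrite cardsU1 cards2 h12 !inE negb_or !gh.
by apply/subsetP => z /setU1P[-> | /set2P[] ->];
  [exact: mem_removable_setU1 | exact: h1R | exact: h2R].
Qed.

Lemma two_le_card_removable_unicyclic U :
  U \in unicyclic -> (2 <= #|removable_edges U|)%N.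
Proof.
rewrite inE => /andP[cU /eqP cardU].
have [f fU cf] : exists2 f, f \in U & conn (U :\ f).
  apply/exists_inP; apply: contraT => /exists_inPn minU.
  by have := card_minimal_connected cU minU; rewrite cardU; lia.
by rewrite -(setD1K fU) two_le_card_removable // !inE eqxx.
Qed.

Lemma cycle_removable_edge S c : conn S -> uniq c -> (2 < size c)%N ->
  cycle (adj S) c -> exists2 h, h \in S & conn (S :\ h).
Proof.
move=> cS; case: c => [|x0 [|x1 [|y c]]] //= uc _.
case/andP=> a01 /andP[a1y]; rewrite rcons_path => /andP[py alast].
have [h hS jh] := sub_adjP _ _ _ a01.
move: uc; rewrite !inE !negb_or => /andP[/and3P[_ x0y x0c] /andP[/andP[x1y x1c] _]].
have off : all (fun z => ~~ incident h z) (y :: c).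
  apply/allP => z zc; apply/negP => /(incident_joins jh) [] Ez; move: zc; rewrite Ez inE.
    by rewrite (negbTE x0y) (negbTE x0c).
  by rewrite (negbTE x1y) (negbTE x1c).
have offy := allP off y (mem_head _ _); have offl := allP off _ (mem_last y c).
exists h; rewrite // (sub_connected_setD1 cS jh) // connect_sub_adj_sym.
apply: connect_trans (connect1 (sub_adj_setD1 _ a1y)) _; first by rewrite offy orbT.
apply: connect_trans (connect1 (sub_adj_setD1 _ alast)); last by rewrite offl.
by apply/connectP; exists c; first exact: path_setD1.
Qed.

Lemma exists_unicyclic_three_removable c : conn setT -> uniq c -> (2 < size c)%N ->
  cycle (simple_adj e) c -> exists2 U, U \in unicyclic & (3 <= #|removable_edges U|)%N.
Proof.
move=> cG uc sc cc.
case: (@arg_minnP _ setT (fun S : {set 'I_m} => conn S) (fun S => #|S|) cG) => T cT minT.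
have minT' h : h \in T -> ~~ conn (T :\ h).
  by move=> hT; apply/negP => /minT; rewrite (cardsD1 h T) hT; lia.
have cardT : #|T| = n.-1.
  by apply/eqP; rewrite eqn_leq card_minimal_connected // card_sub_connected.
have /existsP[x /existsP[y /andP[/andP[_ /existsP[g jg]] nxy]]] :
    [exists x, exists y, simple_adj e x y && ~~ adj T x y].
  apply: contraT; rewrite negb_exists => /forallP none.
  have sub : subrel (simple_adj e) (adj T).
    move=> u v suv; apply: contraT => nuv; case/negP: (none u).
    by apply/existsP; exists v; rewrite suv.
  have [h hT ch] := cycle_removable_edge cT uc sc (sub_cycle sub cc).
  by have := minT' h hT; rewrite ch.
have gT : g \notin T by apply: contra nxy => gT; apply/sub_adjP; exists g.
exists (g |: T).
  rewrite inE (sub_connected_subset (subsetUr _ _) cT) cardsU1 gT cardT /=.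
  by apply/eqP; lia.
apply: three_le_card_removable cT gT _ => h hT; apply: contra nxy => jh.
apply/sub_adjP; exists h => //.
by case: (joins_endpoints jg (joins_edge g)) jh => -[-> ->] //; rewrite joins_sym.
Qed.

Lemma lt_sum_card_removable c : conn setT -> uniq c -> (2 < size c)%N ->
  cycle (simple_adj e) c ->
  (2 * #|unicyclic| < \sum_(U in unicyclic) #|removable_edges U|)%N.
Proof.
move=> cG uc sc cc; have [U0 U0u r3] := exists_unicyclic_three_removable cG uc sc cc.
rewrite mulnC -sum_nat_const (bigD1 U0) //= [X in (_ < X)%N](bigD1 U0) //= -addSn.
rewrite leq_add //; apply: leq_sum => U /andP[uU _].
exact: two_le_card_removable_unicyclic.
Qed.

Lemma sum_card_removable_le :
  (\sum_(U in unicyclic) #|removable_edges U| <= #|spanning_trees| * cyclo n m)%N.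
Proof.
pose A := [set p : {set 'I_m} * 'I_m | (p.1 \in spanning_trees) && (p.2 \in ~: p.1)].
pose B := [set p : {set 'I_m} * 'I_m | (p.1 \in unicyclic) && (p.2 \in removable_edges p.1)].
have cardA : #|A| = (#|spanning_trees| * cyclo n m)%N.
  rewrite card_dep_pairs -sum_nat_const; apply: eq_bigr => T.
  rewrite inE => /andP[_ /eqP cardT].
  by rewrite cardsCs setCK card_ord cardT /cyclo; lia.
have inj : {in B &, injective (fun p : {set 'I_m} * 'I_m => (p.1 :\ p.2, p.2))}.
  move=> [U h] [U' h']; rewrite !inE /= => /andP[_ /andP[hU _]] /andP[_ /andP[h'U _]] [E1 E2].
  by subst h'; rewrite -(setD1K hU) -(setD1K h'U) E1.
rewrite -cardA -card_dep_pairs -(card_in_imset inj); apply/subset_leq_card/subsetP.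
move=> _ /imsetP[[U h] + ->]; rewrite !inE /= => /andP[/andP[_ /eqP cardU] /andP[hU ->]].
rewrite eqxx /= andbT; apply/eqP.
by move: cardU; rewrite (cardsD1 h U) hU add1n => <-.
Qed.

Lemma connect_simple_adj x y : conn setT -> connect (simple_adj e) x y.
Proof.
move=> /sub_connectedP cG; apply: connect_sub (cG x y) => u v a; apply: connect1.
by rewrite /simple_adj (sub_adj_neq a); case/sub_adjP: a => h _ jh; apply/existsP; exists h.
Qed.

End Network.

Local Open Scope ring_scope.

Lemma coef_Xadd1_exp (R : nzRingType) b k :
  (('X + 1 : {poly R}) ^+ b)`_k = 'C(b, k)%:R.
Proof.
elim: b k => [|b IHb] k; first by rewrite expr0 coef1 bin0n.
rewrite exprSr mulrDr mulr1 coefD coefMX IHb.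
by case: k => [|k] /=; rewrite ?add0r ?IHb ?bin0 // binS natrD addrC.
Qed.

Lemma eq_poly_except (R : numDomainType) (p q : {poly R}) a :
  (forall u, u != a -> p.[u] = q.[u]) -> p = q.
Proof.
move=> Epq; apply/eqP; rewrite -subr_eq0; apply: contraT => nz.
pose rs := [seq i.+1%:R + a | i <- iota 0 (size (p - q))].
have rs_roots : all (root (p - q)) rs.
  apply/allP => _ /mapP[i _ ->]; rewrite /root !hornerE Epq ?subrr //.
  by rewrite -subr_eq0 addrK pnatr_eq0.
have rs_uniq : uniq rs.
  by rewrite map_inj_uniq ?iota_uniq // => i j /addIr /eqP; rewrite eqr_nat => /eqP [].
by have := max_poly_roots nz rs_roots rs_uniq; rewrite size_map size_iota ltnn.
Qed.

Lemma coef_even_odd_eq0 (R : comNzRingType) (p q : {poly R}) k :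
  q = 0 \/ p = 0 ->
  let f := p \Po 'X^2 + 'X * (q \Po 'X^2) in f`_k = 0 \/ f`_k.+1 = 0.
Proof.
have even_eq0 j : ~~ odd j -> ('X * (q \Po 'X^2))`_j = 0.
  by case: j => [|j] /=; rewrite coefXM //= coef_comp_poly_Xn // dvdn2 => /negbTE ->.
have odd_eq0 j : odd j -> (p \Po 'X^2)`_j = 0.
  by rewrite coef_comp_poly_Xn // dvdn2 => ->.
move=> /= [-> | ->]; rewrite comp_poly0 ?add0r ?mulr0 ?addr0.
  by case: (boolP (odd k)) => ok; [left | right]; rewrite odd_eq0.
by case: (boolP (odd k)) => ok; [right | left]; rewrite even_eq0 ?negbK.
Qed.

Section Jpolynomial.
Variables (R : realType) (n m : nat) (e : 'I_m -> 'I_n * 'I_n).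
Hypothesis npos : (0 < n)%N.

Local Notation conn := (sub_connected e).

Definition Jpoly : {poly R} :=
  \sum_(S | conn S) (-2) ^+ (#|S| - n.-1) *: ('X + 1) ^+ (m - #|S|).

Lemma cyclo_split S : conn S -> cyclo n m = (#|S| - n.-1 + (m - #|S|))%N.
Proof.
move=> cS; have := card_sub_connected npos cS; have := max_card S.
by rewrite card_ord /cyclo; lia.
Qed.

Lemma Hpoly_sum :
  Hpoly e R = \sum_(S | conn S) (1 - 'X) ^+ (#|S| - n.-1) * 'X ^+ (m - #|S|).
Proof.
rewrite /Hpoly /reliability subn1.
have -> : \sum_(S | conn S) (1 - 'X) ^+ #|S| * 'X ^+ (m - #|S|) =
    (\sum_(S | conn S) (1 - 'X) ^+ (#|S| - n.-1) * 'X ^+ (m - #|S|)) *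
    (1 - 'X : {poly R}) ^+ n.-1.
  rewrite mulr_suml; apply: eq_bigr => S cS.
  by rewrite mulrAC -exprD (subnK (card_sub_connected npos cS)).
by rewrite mulpK // expf_neq0 // -opprB oppr_eq0 -polyC1 polyXsubC_eq0.
Qed.

Lemma Jfun_Jpoly u : u != 1 -> Jfun e u = Jpoly.[u].
Proof.
move=> u1; rewrite /Jfun Hpoly_sum !horner_sum mulr_sumr; apply: eq_bigr => S cS.
have u1' : 1 - u != 0 by rewrite subr_eq0 eq_sym.
rewrite hornerM hornerZ !horner_exp -polyC1 !(hornerD, hornerN, hornerX, hornerC).
set q := (-1 - u) / (1 - u).
have E1 : (u - 1) * (1 - q) = -2 by rewrite /q; field.
have E2 : (u - 1) * q = u + 1 by rewrite /q; field.
by rewrite (cyclo_split cS) exprD -E1 -E2 !exprMn; ring.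
Qed.

Lemma coef_Jpoly k :
  Jpoly`_k = \sum_(S | conn S) (-2) ^+ (#|S| - n.-1) * 'C(m - #|S|, k)%:R.
Proof. by rewrite coef_sum; apply: eq_bigr => S _; rewrite coefZ coef_Xadd1_exp. Qed.

Lemma coef_Jpoly_cyclo : Jpoly`_(cyclo n m) = #|spanning_trees e|%:R.
Proof.
rewrite coef_Jpoly.
rewrite (eq_bigr (fun S : {set 'I_m} => if #|S| == n.-1 then 1 else 0 : R)) => [|S cS].
  by rewrite -big_mkcondr -sumr_const; apply: eq_bigl => S; rewrite inE.
have := cyclo_split cS; have := card_sub_connected npos cS.
case: eqP => [cardS _ dS | ne lb dS]; last by rewrite bin_small ?mulr0 //; lia.
have [-> ->] : (#|S| - n.-1 = 0 /\ m - #|S| = cyclo n m)%N by lia.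
by rewrite expr0 mul1r binn.
Qed.

Lemma coef_Jpoly_cyclo_pred : (0 < cyclo n m)%N ->
  Jpoly`_(cyclo n m).-1 =
    (#|spanning_trees e| * cyclo n m)%:R - (2 * #|unicyclic e|)%:R.
Proof.
move=> dpos; rewrite coef_Jpoly.
rewrite (eq_bigr (fun S : {set 'I_m} => (if #|S| == n.-1 then (cyclo n m)%:R else 0) +
                           (if #|S| == n then -2 else 0) : R)) => [|S cS].
  rewrite big_split /= -!big_mkcondr !sumr_const.
  rewrite (eq_card (_ : _ =i spanning_trees e)) => [|S]; last by rewrite !inE.
  rewrite [in X in _ + X](eq_card (_ : _ =i unicyclic e)) => [|S]; last by rewrite !inE.
  by rewrite mulNrn !natrM mulr_natl mulr_natr.
have := cyclo_split cS; have := card_sub_connected npos cS.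
case: eqP => [cardS _ dS | ne lb dS].
  have [-> -> ->] : [/\ #|S| - n.-1 = 0, m - #|S| = cyclo n m & (#|S| == n) = false]%N.
    by split; [lia | lia | apply/negbTE/eqP; lia].
  by rewrite expr0 mul1r addr0 -{1}(prednK dpos) binSn prednK.
case: eqP => [cardS | ne'].
  have [-> ->] : (#|S| - n.-1 = 1 /\ m - #|S| = (cyclo n m).-1)%N by lia.
  by rewrite expr1 binn mulr1 add0r.
by rewrite bin_small ?mulr0 ?addr0 //; lia.
Qed.

End Jpolynomial.

Theorem proposition3p2 (R : realType) (n m : nat) (e : 'I_m -> 'I_n * 'I_n) :
  is_network e ->
  (exists J0 J1 : {poly R},
      (forall u : R, u != 1 -> Jfun e u = J0.[u ^+ 2] + u * J1.[u ^+ 2]) /\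
      (J1 = 0 \/ J0 = 0)) ->
  is_tree (simple_adj e).
Proof.
move=> [npos [loopless cG]] [J0 [J1 [HJ HJ01]]].
split=> [x y|c uc sc]; first exact: connect_simple_adj.
apply/negP => cc.
have lt := leq_trans (lt_sum_card_removable loopless npos cG uc sc cc)
                     (sum_card_removable_le e npos).
have dpos : (0 < cyclo n m)%N by move: lt; case: (cyclo n m) => //; rewrite muln0.
have tpos : (0 < #|spanning_trees e|)%N by move: lt; case: #|spanning_trees e|.
have JpolyE : Jpoly R e = J0 \Po 'X^2 + 'X * (J1 \Po 'X^2).
  apply: (@eq_poly_except _ _ _ 1) => u u1.
  by rewrite -(Jfun_Jpoly e npos u1) HJ // !hornerE !horner_comp !hornerE.
have := coef_even_odd_eq0 (cyclo n m).-1 HJ01.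
rewrite /= -JpolyE prednK // coef_Jpoly_cyclo_pred // coef_Jpoly_cyclo //.
case=> /eqP; first by rewrite subr_eq0 eqr_nat eq_sym (ltn_eqF lt).
by rewrite pnatr_eq0 (gtn_eqF tpos).
Qed.
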